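(* For every $n\ge1$ and every decoration $\delta\in\{\text{none},\text{down},\text{up},\text{updown}\}^n$, the $\delta$-permutree congruence $\equiv_\delta$ is a lattice congruence of the right weak order on $\mathfrak S_n$: if $\sigma\equiv_\delta\sigma'$ and $\tau\equiv_\delta\tau'$ then $\sigma\wedge\tau\equiv_\delta\sigma'\wedge\tau'$ and $\sigma\vee\tau\equiv_\delta\sigma'\vee\tau'$.
   Context: Permutations of $[n]$ are written as words $\sigma(1)\cdots\sigma(n)$. Right weak order: $\sigma\le\tau$ iff the value-inversion set $\{(a,b):a<b,\ \sigma^{-1}(b)<\sigma^{-1}(a)\}$ of $\sigma$ is contained in that of $\tau$; it is a lattice with meet $\wedge$ and join $\vee$. A decoration is a word $\delta=\delta_1\cdots\delta_n$ over $\{\text{none},\text{down},\text{up},\text{updown}\}$; call $b$ down-decorated if $\delta_b\in\{\text{down},\text{updown}\}$ and up-decorated if $\delta_b\in\{\text{up},\text{updown}\}$. The $\delta$-permutree congruence $\equiv_\delta$ is the equivalence relation on $\mathfrak S_n$ generated by the rewriting rules $U\,ac\,V\,b\,W\equiv U\,ca\,V\,b\,W$ whenever $a<b<c$ and $b$ is down-decorated, and $U\,b\,V\,ac\,W\equiv U\,b\,V\,ca\,W$ whenever $a<b<c$ and $b$ is up-decorated (here $U,V,W$ are words and $ac$ are adjacent letters). *)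

From mathcomp Require Import all_boot all_fingroup.
From Stdlib Require Import Relation_Operators.
Set Implicit Arguments. Unset Strict Implicit. Unset Printing Implicit Defensive.

(* Permutations of [n] are elements of 'S_n = {perm 'I_n}; the value k+1 of the
   paper is the ordinal k, and position i+1 of the word s(1)...s(n) is the
   ordinal i, so the letter at position i is [s i]. *)

Inductive deco := Dnone | Ddown | Dup | Dupdown.

Definition down_dec (d : deco) : bool :=
  match d with Ddown | Dupdown => true | _ => false end.
Definition up_dec (d : deco) : bool :=
  match d with Dup | Dupdown => true | _ => false end.

Definition weak_le n (s t : 'S_n) : bool :=
  [forall a : 'I_n, forall b : 'I_n,
     ((a < b) && ((s^-1)%g b < (s^-1)%g a)) ==> ((t^-1)%g b < (t^-1)%g a)].

Definition is_meet n (s t m : 'S_n) : bool :=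
  [&& weak_le m s, weak_le m t &
      [forall u : 'S_n, (weak_le u s && weak_le u t) ==> weak_le u m]].
Definition is_join n (s t j : 'S_n) : bool :=
  [&& weak_le s j, weak_le t j &
      [forall u : 'S_n, (weak_le s u && weak_le t u) ==> weak_le j u]].

Definition wmeet n (s t : 'S_n) : 'S_n := odflt s [pick m | is_meet s t m].
Definition wjoin n (s t : 'S_n) : 'S_n := odflt s [pick j | is_join s t j].

Definition permutree_step n (delta : 'I_n -> deco) (s t : 'S_n) : Prop :=
  exists (i i' : 'I_n), val i' = (val i).+1 /\
    (forall j, t j = s (tperm i i' j)) /\
    exists b : 'I_n,
      minn (s i) (s i') < b < maxn (s i) (s i') /\
      ((down_dec (delta b) /\ i' < (s^-1)%g b) \/
       (up_dec (delta b) /\ (s^-1)%g b < i)).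

Definition permutree_cong n (delta : 'I_n -> deco) : 'S_n -> 'S_n -> Prop :=
  clos_refl_sym_trans 'S_n (permutree_step delta).

From mathcomp Require Import all_boot all_fingroup zify.
From Stdlib Require Import Relation_Operators.
Set Implicit Arguments. Unset Strict Implicit. Unset Printing Implicit Defensive.

(* The join of s and t in
   the weak order is the permutation whose inversion set is the transitive
   closure of the union of the inversion sets of s and t; the meet is the same
   construction for the reversed order on values, which complements inversion
   sets. As the join is symmetric, it suffices to change one argument by a
   single rewriting step s -> s' exchanging adjacent values a < c across a
   decorated value b with a < b < c. The only inversion added is (c, a), so
   every new inversion (p, q) of the join has q < b < p, with p reaching c and
   a reaching q; hence p and q lie on the side of b prescribed by its
   decoration, in both joins. Two permutations differing only on such pairs
   are linked by rewriting steps, each exchanging an adjacent pair across b. *)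

Definition before n (s : 'S_n) (x y : 'I_n) : bool := (s^-1)%g x < (s^-1)%g y.

Section PositionOrder.
Variable n : nat.
Implicit Types (s u v : 'S_n) (x y z : 'I_n).

Lemma before_irr s x : before s x x = false.
Proof. by rewrite /before ltnn. Qed.

Lemma before_trans s x y z : before s x y -> before s y z -> before s x z.
Proof. rewrite /before; lia. Qed.

Lemma before_asym s x y : before s x y -> before s y x = false.
Proof. rewrite /before; lia. Qed.

Lemma before_total s x y : x != y -> before s x y || before s y x.
Proof.
move=> xy; rewrite /before -neq_ltn; apply: contra xy => /eqP.
by move/val_inj/perm_inj->.
Qed.

Lemma perm_increasing_id (g : 'S_n) : {homo g : i j / i < j} -> g = 1%g.
Proof.
have ge_id (h : 'S_n) : {homo h : i j / i < j} -> forall i : 'I_n, i <= h i.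
  move=> h_incr i; have [k] := ubnP i; elim: k i => // k IH i /ltnSE le_ik.
  case: i le_ik => [[|m] lt_mn] le_mk //=.
  have := h_incr (Ordinal (ltnW lt_mn)) (Ordinal lt_mn) (ltnSn m).
  by have := IH (Ordinal (ltnW lt_mn)) le_mk; rewrite /=; lia.
move=> g_incr; have ginv_incr : {homo (g^-1)%g : i j / i < j}.
  move=> i j lt_ij; rewrite ltnNge leq_eqVlt negb_or; apply/andP; split.
    by apply: contraTneq lt_ij => /val_inj/perm_inj->; rewrite ltnn.
  by apply: contraTN lt_ij => /g_incr; rewrite !permKV -leqNgt => /ltnW.
apply/permP => i; apply: val_inj; rewrite perm1 /=; apply/eqP.
by rewrite eqn_leq ge_id // andbT -{2}(permK g i) ge_id.
Qed.

Lemma before_sub_eq u v : (forall x y, before u x y -> before v x y) -> u = v.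
Proof.
move=> uv; suff : (u * v^-1)%g = 1%g by move/eqP; rewrite mulg_eq1 invgK => /eqP.
apply: perm_increasing_id => i j lt_ij; rewrite !permM.
by apply: uv; rewrite /before !permK.
Qed.

Lemma before_inj u v : (forall x y, before u x y = before v x y) -> u = v.
Proof. by move=> uv; apply: before_sub_eq => x y; rewrite uv. Qed.

Lemma perm_of_total_order (R : rel 'I_n) :
  irreflexive R -> transitive R -> (forall x y, x != y -> R x y || R y x) ->
  {u | forall x y, before u x y = R x y}.
Proof.
move=> Rirr Rtr Rtot; pose rank x := #|[pred y | R y x]|.
have rank_mono x y : R x y -> rank x < rank y.
  move=> Rxy; apply: proper_card; apply/properP; split.
    by apply/subsetP => z; rewrite !inE => Rzx; exact: Rtr Rzx Rxy.
  by exists x; rewrite !inE ?Rirr.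
have rank_lt x : rank x < n.
  rewrite -[n]card_ord; apply: proper_card; apply/properP; split; first exact/subsetP.
  by exists x; rewrite !inE ?Rirr.
have rank_inj : injective (fun x => Ordinal (rank_lt x)).
  move=> x y /(congr1 val) /= Exy; apply/eqP; apply/negPn/negP.
  by case/Rtot/orP => /rank_mono; rewrite Exy ltnn.
exists (perm rank_inj)^-1%g => x y; rewrite /before invgK !permE /=.
have [->|xy] := eqVneq x y; first by rewrite ltnn Rirr.
case/orP: (Rtot _ _ xy) => [R_xy | R_yx]; first by rewrite rank_mono.
rewrite ltnNge ltnW ?rank_mono //; apply/esym/negP => R_xy.
by have := Rtr _ _ _ R_xy R_yx; rewrite Rirr.
Qed.

End PositionOrder.

(* The flag r reverses the order on values. This complements inversion sets,
   so the constructions below give the join for r = false and the meet for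
   r = true. *)
Definition vlt (r : bool) n (x y : 'I_n) : bool := if r then y < x else x < y.
Definition between n (x b y : 'I_n) : bool := minn x y < b < maxn x y.

Section ValueOrder.
Variables (r : bool) (n : nat).
Implicit Types x y z b : 'I_n.

Lemma vlt_irr x : vlt r x x = false.
Proof. by rewrite /vlt; case: r; rewrite ltnn. Qed.

Lemma vlt_trans x y z : vlt r x y -> vlt r y z -> vlt r x z.
Proof. rewrite /vlt; case: r; lia. Qed.

Lemma vlt_asym x y : vlt r x y -> vlt r y x = false.
Proof. rewrite /vlt; case: r; lia. Qed.

Lemma vlt_total x y : x != y -> vlt r x y || vlt r y x.
Proof. by rewrite -(inj_eq val_inj) neq_ltn /vlt; case: r; rewrite // orbC. Qed.

Lemma vlt_between x b y : vlt r x b -> vlt r b y -> between x b y.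
Proof. rewrite /vlt /between; case: r; lia. Qed.

Lemma between_vlt x b y : vlt r x y -> between x b y -> vlt r x b && vlt r b y.
Proof. rewrite /vlt /between; case: r; lia. Qed.

End ValueOrder.

Lemma between_sym n (x b y : 'I_n) : between x b y = between y b x.
Proof. by rewrite /between minnC maxnC. Qed.

Lemma between_neq n (x b y : 'I_n) : between x b y -> (b != x) && (b != y).
Proof.
by move=> bxy; apply/andP; split; apply: contraTneq bxy => ->; rewrite /between; lia.
Qed.

Lemma connect_sub_trans (T : finType) (e R : rel T) :
  transitive R -> subrel e R -> forall x y, connect e x y -> x = y \/ R x y.
Proof.
move=> Rtr eR x y /connectP [p]; elim: p x => [|w p IH] x /=; first by move=> _ ->; left.
case/andP=> exw pw Ey; case: (IH w pw Ey) => [<-|Rwy]; right; first exact: eR.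
exact: Rtr (eR _ _ exw) Rwy.
Qed.

Section ClosureOrder.
Variables (r : bool) (n : nat) (e : rel 'I_n).
Implicit Types x y z : 'I_n.

(* The position order of the permutation whose inversions are given by
   connect e, an edge y -> x standing for the inversion of y above x. *)
Definition closure_before x y :=
  (vlt r x y && ~~ connect e y x) || (vlt r y x && connect e x y).

Lemma closure_before_irr : irreflexive closure_before.
Proof. by move=> x; rewrite /closure_before vlt_irr. Qed.

Lemma closure_before_total x y : x != y -> closure_before x y || closure_before y x.
Proof.
move=> xy; rewrite /closure_before.
by case/orP: (vlt_total r xy) => lt; rewrite lt (vlt_asym lt) /=; case: connect.
Qed.

Lemma closure_before_lt x y : vlt r x y -> closure_before x y = ~~ connect e y x.
Proof. by move=> lt; rewrite /closure_before lt (vlt_asym lt) /= orbF. Qed.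

Lemma closure_before_gt x y : vlt r y x -> closure_before x y = connect e x y.
Proof. by move=> lt; rewrite /closure_before lt (vlt_asym lt). Qed.

(* Inversion sets, and unions of them, have this property; it is what makes
   the transitive closure again an inversion set. *)
Hypothesis e_split : forall w y z, e z w -> vlt r w y -> vlt r y z -> e z y || e y w.

Lemma connect_split x y z : vlt r x y -> vlt r y z -> connect e z x ->
  connect e z y || connect e y x.
Proof.
move=> xy yz /connectP [p]; elim: p z yz => [|w p IH] z yz /=.
  by move=> _ zx; have := vlt_trans xy yz; rewrite zx vlt_irr.
case/andP=> ezw pw Ex; have wx : connect e w x by apply/connectP; exists p.
have [<-|wy] := eqVneq w y; first by rewrite connect1.
case/orP: (vlt_total r wy) => lt.
  case/orP: (e_split ezw lt yz) => [ezy|eyw]; first by rewrite connect1.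
  by rewrite (connect_trans (connect1 eyw) wx) orbT.
case/orP: (IH w lt pw Ex) => [wy'|->]; last by rewrite orbT.
by rewrite (connect_trans (connect1 ezw) wy').
Qed.

Lemma closure_before_trans : transitive closure_before.
Proof.
move=> y x z /orP [/andP [xy nyx] | /andP [yx xy]] /orP [/andP [yz nzy] | /andP [zy yz]].
- rewrite closure_before_lt ?(vlt_trans xy yz) //; apply/negP => zx.
  by have := connect_split xy yz zx; rewrite (negbTE nzy) (negbTE nyx).
- have [exz|xz] := eqVneq x z; first by rewrite exz yz in nyx.
  case/orP: (vlt_total r xz) => lt.
    by rewrite closure_before_lt //; apply: contra nyx => /(connect_trans yz).
  rewrite closure_before_gt //.
  by have := connect_split lt xy yz; rewrite (negbTE nyx).
- have [exz|xz] := eqVneq x z; first by rewrite -exz xy in nzy.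
  case/orP: (vlt_total r xz) => lt.
    by rewrite closure_before_lt //; apply: contra nzy => /connect_trans; apply.
  by rewrite closure_before_gt //; have := connect_split yz lt xy; rewrite (negbTE nzy) orbF.
- by rewrite closure_before_gt ?(vlt_trans zy yx) //; exact: connect_trans xy yz.
Qed.

End ClosureOrder.

Definition inv_edge r n (s t : 'S_n) : rel 'I_n :=
  fun y x => vlt r x y && (before s y x || before t y x).

Lemma inv_edge_split r n (s t : 'S_n) w y z :
  inv_edge r s t z w -> vlt r w y -> vlt r y z ->
  inv_edge r s t z y || inv_edge r s t y w.
Proof.
move=> /andP [_ zw] wy yz; rewrite /inv_edge wy yz /=.
have zy : z != y by apply: contraTneq yz => ->; rewrite vlt_irr.
have split_before (u : 'S_n) : before u z w -> before u z y || before u y w.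
  move=> uzw; case/orP: (before_total u zy) => [->|/before_trans/(_ uzw) ->] //.
  by rewrite orbT.
by case/orP: zw => /split_before /orP [] ->; rewrite ?orbT.
Qed.

Lemma rjoin_spec r n (s t : 'S_n) :
  {u : 'S_n | forall x y, before u x y = closure_before r (inv_edge r s t) x y}.
Proof.
exact: perm_of_total_order (closure_before_irr r (inv_edge r s t))
  (closure_before_trans (@inv_edge_split r n s t)) (@closure_before_total r n _).
Qed.

Definition rjoin r n (s t : 'S_n) : 'S_n := sval (rjoin_spec r s t).

Lemma before_rjoin r n (s t : 'S_n) x y :
  before (rjoin r s t) x y = closure_before r (inv_edge r s t) x y.
Proof. exact: svalP (rjoin_spec r s t) x y. Qed.

Lemma rjoinC r n (s t : 'S_n) : rjoin r s t = rjoin r t s.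
Proof.
apply: before_inj => x y; rewrite !before_rjoin /closure_before.
have inv_edgeC : inv_edge r s t =2 inv_edge r t s by move=> a b; rewrite /inv_edge orbC.
by rewrite !(eq_connect inv_edgeC).
Qed.

Definition rweak_le r n (s t : 'S_n) := forall x y, vlt r x y -> before s y x -> before t y x.

Definition rweak_lub r n (s t u : 'S_n) :=
  [/\ rweak_le r s u, rweak_le r t u &
      forall v, rweak_le r s v -> rweak_le r t v -> rweak_le r u v].

Lemma rweak_le_anti r n (s t : 'S_n) : rweak_le r s t -> rweak_le r t s -> s = t.
Proof.
move=> st ts; apply: before_sub_eq => x y sxy.
have [exy|xy] := eqVneq x y; first by rewrite exy before_irr in sxy.
case/orP: (vlt_total r xy) => lt; last exact: st.
case/orP: (before_total t xy) => // tyx.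
by have := ts _ _ lt tyx; rewrite (before_asym sxy).
Qed.

Lemma rweak_lub_unique r n (s t u v : 'S_n) :
  rweak_lub r s t u -> rweak_lub r s t v -> u = v.
Proof.
by case=> su tu lub_u [sv tv lub_v]; apply: rweak_le_anti; [apply: lub_u | apply: lub_v].
Qed.

Lemma rjoin_lub r n (s t : 'S_n) : rweak_lub r s t (rjoin r s t).
Proof.
have inv_rjoin x y : vlt r x y -> before (rjoin r s t) y x = connect (inv_edge r s t) y x.
  by move=> lt; rewrite before_rjoin closure_before_gt.
split=> [x y lt syx | x y lt tyx | v sv tv x y lt].
- by rewrite inv_rjoin // connect1 // /inv_edge lt syx.
- by rewrite inv_rjoin // connect1 // /inv_edge lt tyx orbT.
have v_trans : transitive (before v) by move=> ? ? ?; apply: before_trans.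
have edge_v : subrel (inv_edge r s t) (before v).
  by move=> y' x' /andP [lt' /orP [] ?]; [apply: sv | apply: tv].
rewrite inv_rjoin // => /(connect_sub_trans v_trans edge_v) [eyx|//].
by rewrite eyx vlt_irr in lt.
Qed.

Lemma weak_leP n (s t : 'S_n) : reflect (rweak_le false s t) (weak_le s t).
Proof.
apply: (iffP forallP) => [le_st x y xy syx | le_st a].
  by have /forallP/(_ y)/implyP := le_st x; apply; apply/andP.
by apply/forallP => b; apply/implyP => /andP []; apply: le_st.
Qed.

Lemma weak_le_revP n (s t : 'S_n) : reflect (rweak_le true t s) (weak_le s t).
Proof.
have neq (x y : 'I_n) : vlt true x y -> y != x by apply: contraTneq => ->; rewrite vlt_irr.
apply: (iffP idP) => [/weak_leP le_st x y yx tyx | le_ts].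
  case/orP: (before_total s (neq _ _ yx)) => // sxy.
  by have := le_st y x yx sxy; rewrite (before_asym tyx).
apply/weak_leP => x y xy syx; case/orP: (before_total t (neq _ _ xy)) => // txy.
by have := le_ts y x xy txy; rewrite (before_asym syx).
Qed.

Lemma pick_rweak_lub r n (le : rel 'S_n) (s t : 'S_n) :
  (forall v w, reflect (rweak_le r v w) (le v w)) ->
  odflt s [pick u | [&& le s u, le t u & [forall v, le s v && le t v ==> le u v]]]
  = rjoin r s t.
Proof.
move=> leP.
have lubP u : reflect (rweak_lub r s t u)
    [&& le s u, le t u & [forall v, le s v && le t v ==> le u v]].
  apply: (iffP and3P) => [[/leP su /leP tu /forallP ub] | [su tu ub]].
    split=> // v sv tv; apply/leP; apply: (implyP (ub v)).
    by apply/andP; split; apply/leP.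
  split; try exact/leP.
  by apply/forallP => v; apply/implyP => /andP [/leP sv /leP tv]; apply/leP/ub.
case: pickP => [u /lubP lub_u | no_lub] /=; first exact: rweak_lub_unique (rjoin_lub r s t).
by have /lubP := rjoin_lub r s t; rewrite no_lub.
Qed.

Lemma wjoinE n (s t : 'S_n) : wjoin s t = rjoin false s t.
Proof. exact: pick_rweak_lub s t (@weak_leP n). Qed.

Lemma wmeetE n (s t : 'S_n) : wmeet s t = rjoin true s t.
Proof. exact: pick_rweak_lub s t (fun v w => weak_le_revP w v). Qed.

Lemma adjacent_disagreement n (u v : 'S_n) : u != v ->
  exists i i' : 'I_n, i' = i.+1 :> nat /\ before v (u i') (u i).
Proof.
move=> /negP uv; have [[i j] /andP [/eqP ij vji] | no_adj] :=
  pickP [pred ij : 'I_n * 'I_n | (ij.2 == ij.1.+1 :> nat) && before v (u ij.2) (u ij.1)].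
  by exists i, j.
case: uv; apply/eqP/before_sub_eq.
have adj (i j : 'I_n) : j = i.+1 :> nat -> before v (u i) (u j).
  move=> ij; have uij : u i != u j by apply/eqP => /perm_inj eij; move: ij; rewrite eij; lia.
  case/orP: (before_total v uij) => // vji.
  by have := no_adj (i, j); rewrite /= ij eqxx vji.
have far d (i j : 'I_n) : j = i + d.+1 :> nat -> before v (u i) (u j).
  elim: d j => [|d IH] j ij; first by apply: adj; lia.
  have lt : i + d.+1 < n by have := ltn_ord j; lia.
  by apply: (before_trans (IH (Ordinal lt) _) (adj (Ordinal lt) j _)) => /=; lia.
move=> x y uxy; rewrite -[x](permKV u) -[y](permKV u).
by apply: (far ((u^-1)%g y - (u^-1)%g x).-1); move: uxy; rewrite /before; lia.
Qed.

Definition disagree n (u v : 'S_n) :=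
  [pred p : 'I_n * 'I_n | before u p.1 p.2 != before v p.1 p.2].

Section AdjacentSwap.
Variables (n : nat) (s s' : 'S_n) (i i' : 'I_n).
Hypotheses (ii' : i' = i.+1 :> nat) (s'E : forall j, s' j = s (tperm i i' j)).

Lemma invg_swap x : (s'^-1)%g x = tperm i i' ((s^-1)%g x).
Proof. by apply: (@perm_inj _ s'); rewrite permKV s'E tpermK permKV. Qed.

Lemma before_swap x y : ~~ ((x \in [:: s i; s i']) && (y \in [:: s i; s i'])) ->
  before s' x y = before s x y.
Proof.
have inv_in z : ((s^-1)%g z \in [:: i; i']) = (z \in [:: s i; s i']).
  by rewrite !inE -!(can2_eq (permKV s) (permK s)).
rewrite /before !invg_swap -!inv_in !inE.
case: tpermP => [->|->|/eqP + /eqP +]; case: tpermP => [->|->|/eqP + /eqP +];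
rewrite ?eqxx ?orbT //= -?(inj_eq (@ord_inj n)); lia.
Qed.

Lemma before_adjacent : before s (s i) (s i').
Proof. by rewrite /before !permK ii'. Qed.

Lemma before_swap_adjacent : before s' (s i') (s i).
Proof. by rewrite /before !invg_swap !permK tpermL tpermR ii'. Qed.

Variable v : 'S_n.
Hypothesis v_adjacent : before v (s i') (s i).

Lemma disagree_swap : disagree s' v \proper disagree s v.
Proof.
have ac_swap := before_asym before_swap_adjacent.
apply/properP; split; last first.
  by exists (s i, s i');
    rewrite !inE /= ?before_adjacent ?ac_swap ?(before_asym v_adjacent).
apply/subsetP => -[x y]; rewrite !inE /=.
have [xy_in|] := boolP ((x \in [:: s i; s i']) && (y \in [:: s i; s i'])); last first.
  by move/before_swap->.
rewrite !inE in xy_in; case/andP: xy_in => /orP [] /eqP-> /orP [] /eqP->;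
by rewrite ?before_irr ?eqxx ?ac_swap ?before_swap_adjacent ?v_adjacent
  ?(before_asym v_adjacent).
Qed.

End AdjacentSwap.

(* The side of b on which letters may be exchanged across a down-decorated
   (dn = true) or up-decorated b: before b, resp. after it. *)
Definition side n (dn : bool) (b : 'I_n) (w : 'S_n) (z : 'I_n) : bool :=
  if dn then before w z b else before w b z.

Definition flips_across n dn (b : 'I_n) (u v : 'S_n) :=
  forall x y, before u x y != before v x y ->
  [&& between x b y, side dn b u x, side dn b u y, side dn b v x & side dn b v y].

Section Flips.
Variables (n : nat) (delta : 'I_n -> deco) (dn : bool) (b : 'I_n).
Hypothesis b_dec : if dn then down_dec (delta b) else up_dec (delta b).

Lemma flip_step u v : flips_across dn b u v -> u != v ->
  exists2 u1, permutree_step delta u u1 &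
    flips_across dn b u1 v /\ #|disagree u1 v| < #|disagree u v|.
Proof.
move=> flips uv; have [i [i' [ii' vi'i]]] := adjacent_disagreement uv.
pose u1 := (tperm i i' * u)%g; have u1E j : u1 j = u (tperm i i' j) by rewrite permM.
have shrink := disagree_swap ii' u1E vi'i.
have uv_ac : before u (u i) (u i') != before v (u i) (u i').
  by rewrite (before_adjacent u ii') (before_asym vi'i).
have /and5P [b_ac side_a side_c _ _] := flips _ _ uv_ac.
have b_out z : ~~ ((z \in [:: u i; u i']) && (b \in [:: u i; u i'])).
  by have /andP [ba bc] := between_neq b_ac; rewrite !inE (negbTE ba) (negbTE bc) andbF.
have side_u1 z : side dn b u1 z = side dn b u z.
  by rewrite /side; case: (dn); rewrite (before_swap ii' u1E) // andbC.
exists u1.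
  exists i, i'; split=> //; split=> //; exists b; split=> //.
  move: b_dec side_a side_c; rewrite /side /before !permK.
  by case: (dn) => dec ib i'b; [left | right].
split; last exact: proper_card shrink.
move=> x y dxy; rewrite !side_u1; apply: flips.
by have := subsetP (proper_sub shrink) (x, y); rewrite !inE; apply.
Qed.

Lemma flips_across_cong u v : flips_across dn b u v -> permutree_cong delta u v.
Proof.
have [k] := ubnP #|disagree u v|; elim: k u => // k IH u lt_k flips.
have [<-|uv] := eqVneq u v; first exact: rst_refl.
have [u1 step [flips1 lt1]] := flip_step flips uv.
apply: (rst_trans _ _ _ u1); first exact: rst_step.
by apply: IH flips1; apply: leq_trans lt1 _.
Qed.
End Flips.

Lemma connect_add_edge (T : finType) (e e' : rel T) (c a : T) :
  (forall y x, e' y x -> e y x \/ (y = c /\ x = a)) ->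
  forall y x, connect e' y x -> connect e y x \/ (connect e y c /\ connect e' a x).
Proof.
move=> e'E y x /connectP [p]; elim: p y => [|w p IH] y /=; first by move=> _ ->; left.
case/andP=> e'yw pw Ex; have wx : connect e' w x by apply/connectP; exists p.
case: (e'E _ _ e'yw) => [eyw|[-> wa]]; last by right; rewrite connect0 -wa.
case: (IH w pw Ex) => [ewx|[ewc e'ax]]; [left | right].
  exact: connect_trans (connect1 eyw) ewx.
by split=> //; apply: connect_trans (connect1 eyw) ewc.
Qed.

Lemma connect_inv_edge r n (s t : 'S_n) y x :
  connect (inv_edge r s t) y x -> y = x \/ vlt r x y.
Proof.
apply: (@connect_sub_trans _ _ (fun y x => vlt r x y)) => [w1 w2 w3 le12 le23 | ? ?].
  exact: vlt_trans le23 le12.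
by case/andP.
Qed.

Section SwapJoin.
Variables (r : bool) (n : nat) (delta : 'I_n -> deco) (s s' t : 'S_n) (i i' b : 'I_n).
Hypotheses (ii' : i' = i.+1 :> nat) (s'E : forall j, s' j = s (tperm i i' j)).
Hypotheses (ab : vlt r (s i) b) (bc : vlt r b (s i')).

Local Notation a := (s i).
Local Notation c := (s i').
Local Notation e := (inv_edge r s t).
Local Notation e' := (inv_edge r s' t).
Local Notation u := (rjoin r s t).
Local Notation u' := (rjoin r s' t).

Let ac : vlt r a c := vlt_trans ab bc.

Lemma inv_edge_swap_sub : subrel e e'.
Proof.
move=> y x /andP [xy /orP [syx|tyx]]; rewrite /inv_edge xy ?tyx ?orbT //=.
have [yx_in|yx_out] := boolP ((y \in [:: a; c]) && (x \in [:: a; c])); last first.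
  by rewrite (before_swap ii' s'E yx_out) syx.
rewrite !inE in yx_in; case/andP: yx_in => /orP [] /eqP ey /orP [] /eqP ex;
  rewrite ey ex ?vlt_irr ?(vlt_asym ac) // in xy syx.
by rewrite (before_asym (before_adjacent s ii')) in syx.
Qed.

Lemma inv_edge_swap_new y x : e' y x -> e y x \/ (y = c /\ x = a).
Proof.
move=> /andP [xy /orP [s'yx|tyx]]; last by left; rewrite /inv_edge xy tyx orbT.
have [yx_in|yx_out] := boolP ((y \in [:: a; c]) && (x \in [:: a; c])); last first.
  by left; rewrite /inv_edge xy -(before_swap ii' s'E yx_out) s'yx.
rewrite !inE in yx_in; case/andP: yx_in => /orP [] /eqP ey /orP [] /eqP ex;
  rewrite ey ex ?vlt_irr ?(vlt_asym ac) // in xy; by right.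
Qed.

Lemma connect_swap_sub y x : connect e y x -> connect e' y x.
Proof. by apply: connect_sub => y' x' /inv_edge_swap_sub/connect1. Qed.

Lemma connect_swap_from_a x : connect e' a x -> connect e a x.
Proof.
case/(connect_add_edge inv_edge_swap_new) => // -[/connect_inv_edge [eac|ca] _].
  by move: ac; rewrite eac vlt_irr.
by rewrite (vlt_asym ac) in ca.
Qed.

(* The new inversions of the join all pass through the new inversion (c, a). *)
Lemma new_inversion p q : connect e' p q -> ~~ connect e p q ->
  [/\ connect e p c, connect e a q, vlt r q b & vlt r b p].
Proof.
move=> e'pq nepq; have [epq|[epc e'aq]] := connect_add_edge inv_edge_swap_new e'pq.
  by rewrite epq in nepq.
have eaq := connect_swap_from_a e'aq; split=> //.
  by case: (connect_inv_edge eaq) => [<-|qa] //; apply: vlt_trans qa ab.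
by case: (connect_inv_edge epc) => [->|cp] //; apply: vlt_trans bc cp.
Qed.

Lemma rjoin_swap_disagree x y : before u x y != before u' x y ->
  (connect e' x y && ~~ connect e x y) || (connect e' y x && ~~ connect e y x).
Proof.
rewrite !before_rjoin; have [<-|xy] := eqVneq x y; first by rewrite !closure_before_irr.
case/orP: (vlt_total r xy) => lt.
  rewrite !closure_before_lt //; case eyx: (connect e y x).
    by rewrite (connect_swap_sub eyx).
  by case: (connect e' y x); rewrite ?orbT.
rewrite !closure_before_gt //; case exy: (connect e x y).
  by rewrite (connect_swap_sub exy).
by case: (connect e' x y).
Qed.

Lemma new_inversion_down p q : i' < (s^-1)%g b -> connect e' p q -> ~~ connect e p q ->
  [&& side true b u p, side true b u q, side true b u' p & side true b u' q].
Proof.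
move=> i'b e'pq nepq; have [epc _ qb bp] := new_inversion e'pq nepq.
have epb : connect e p b.
  by apply: connect_trans epc (connect1 _); rewrite /inv_edge bc /before permK i'b.
have nebq : ~~ connect e b q by apply: contra nepq; apply: connect_trans epb.
rewrite /side !before_rjoin (closure_before_gt _ bp) (closure_before_lt _ qb).
rewrite (closure_before_gt _ bp) (closure_before_lt _ qb) epb nebq connect_swap_sub //=.
apply: contra nebq => /(connect_add_edge inv_edge_swap_new) [//|[/connect_inv_edge ebc _]].
by case: ebc => [ebc|cb]; [move: bc; rewrite ebc vlt_irr | rewrite (vlt_asym bc) in cb].
Qed.

Lemma new_inversion_up p q : (s^-1)%g b < i -> connect e' p q -> ~~ connect e p q ->
  [&& side false b u p, side false b u q, side false b u' p & side false b u' q].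
Proof.
move=> bi e'pq nepq; have [_ eaq qb bp] := new_inversion e'pq nepq.
have ebq : connect e b q.
  by apply: connect_trans (connect1 _) eaq; rewrite /inv_edge ab /before permK bi.
have nepb : ~~ connect e p b by apply: contra nepq => /connect_trans; apply.
rewrite /side !before_rjoin (closure_before_lt _ bp) (closure_before_gt _ qb).
rewrite (closure_before_lt _ bp) (closure_before_gt _ qb) ebq nepb (connect_swap_sub ebq).
rewrite andbT /=.
apply: contra nepb => /(connect_add_edge inv_edge_swap_new) [//|[_ /connect_swap_from_a]].
case/connect_inv_edge => [eab|ba]; first by move: ab; rewrite eab vlt_irr.
by rewrite (vlt_asym ab) in ba.
Qed.

Lemma rjoin_swap_flips dn : (if dn then i' < (s^-1)%g b else (s^-1)%g b < i) ->
  flips_across dn b u u'.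
Proof.
move=> pos x y /rjoin_swap_disagree.
have flip p q : connect e' p q -> ~~ connect e p q ->
    [&& between q b p, side dn b u p, side dn b u q, side dn b u' p & side dn b u' q].
  move=> e'pq nepq; have [_ _ qb bp] := new_inversion e'pq nepq.
  rewrite (vlt_between qb bp) /=.
  by case: (dn) pos => pos; [apply: new_inversion_down | apply: new_inversion_up].
case/orP => /andP [e'pq nepq]; case/and5P: (flip _ _ e'pq nepq) => *;
by apply/and5P; split; rewrite // between_sym.
Qed.

Lemma rjoin_swap_cong :
  (down_dec (delta b) /\ i' < (s^-1)%g b) \/ (up_dec (delta b) /\ (s^-1)%g b < i) ->
  permutree_cong delta u u'.
Proof.
case=> [[dec pos] | [dec pos]].
  by apply: (@flips_across_cong _ _ true _ dec); apply: rjoin_swap_flips.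
by apply: (@flips_across_cong _ _ false _ dec); apply: rjoin_swap_flips.
Qed.

End SwapJoin.

Lemma rjoin_step_cong r n (delta : 'I_n -> deco) (s s' t : 'S_n) :
  permutree_step delta s s' -> permutree_cong delta (rjoin r s t) (rjoin r s' t).
Proof.
case=> i [i' [ii' [s'E [b [b_mid dec]]]]].
have s_neq : s i != s i' by apply/eqP => /perm_inj eii'; move: ii'; rewrite eii'; lia.
case/orP: (vlt_total r s_neq) => ac.
  by have /andP [ab bc] := between_vlt ac b_mid; apply: rjoin_swap_cong ii' s'E ab bc dec.
(* Otherwise the step, read backwards from s', exchanges the pair in increasing order. *)
have sE j : s j = s' (tperm i i' j) by rewrite s'E tpermK.
have [s'i s'i'] : s' i = s i' /\ s' i' = s i by rewrite !s'E tpermL tpermR.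
have /andP [ab bc] : vlt r (s' i) b && vlt r b (s' i').
  by rewrite s'i s'i' between_vlt // between_sym.
have /andP [bi bi'] : ((s^-1)%g b != i) && ((s^-1)%g b != i').
  by rewrite !(can2_eq (permKV s) (permK s)); apply: between_neq.
have s'b : (s'^-1)%g b = (s^-1)%g b by rewrite (invg_swap s'E) tpermD // eq_sym.
by apply: rst_sym; apply: rjoin_swap_cong ii' sE ab bc _; rewrite s'b.
Qed.

Lemma rjoin_cong r n (delta : 'I_n -> deco) (s s' t t' : 'S_n) :
  permutree_cong delta s s' -> permutree_cong delta t t' ->
  permutree_cong delta (rjoin r s t) (rjoin r s' t').
Proof.
have cong_l (x x' y : 'S_n) :
    permutree_cong delta x x' -> permutree_cong delta (rjoin r x y) (rjoin r x' y).
  elim=> [x1 x2 /rjoin_step_cong // | x1 | x1 x2 _ IH | x1 x2 x3 _ IH1 _ IH2].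
  - exact: rst_refl.
  - exact: rst_sym.
  - exact: rst_trans IH1 IH2.
move=> ss' tt'; apply: (rst_trans _ _ _ (rjoin r s' t)); first exact: cong_l.
by rewrite (rjoinC r s' t) (rjoinC r s' t'); apply: cong_l.
Qed.

Theorem proposition2p13 (n : nat) (delta : 'I_n -> deco) (s s' t t' : 'S_n) :
  1 <= n ->
  permutree_cong delta s s' -> permutree_cong delta t t' ->
  permutree_cong delta (wmeet s t) (wmeet s' t') /\
  permutree_cong delta (wjoin s t) (wjoin s' t').
Proof.
by move=> _ ss' tt'; rewrite !wmeetE !wjoinE; split; apply: rjoin_cong.
Qed.
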